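(* Let $X$ be a metrizable vector space over $K$ with metric $d_X$, and let $Y$ be a normed (respectively Banach) algebra over $K$ with $d_Y$ the metric induced by its norm. For maps $F_1,F_2:X\to Y$ define $(F_1*F_2)(x)=\frac{F_1(x)F_2(x)}{d_X(x,0)}$ for $x\neq0$ and $(F_1*F_2)(0)=F_1(0)F_2(0)$. Then $B_d(X,Y)$ with multiplication $*$ is a normed (respectively Banach) algebra with norm $\|F\|_{B_d(X,Y)}=d(F,0)$. If $Y$ is unital, then $B_d(X,Y)$ is unital.
   Context: $K$ is $\mathbb{R}$ or $\mathbb{C}$. For maps $F_1,F_2:X\to Y$, $d(F_1,F_2)=\max\left\{\sup_{x\neq0,x\in X}\frac{\|F_1(x)-F_2(x)\|_Y}{d_X(x,0)},\ \|F_1(0)-F_2(0)\|_Y\right\}\in[0,\infty]$, and $B_d(X,Y)$ is the set of maps $F:X\to Y$ with $d(F,0)<\infty$, with pointwise vector operations. A normed algebra has submultiplicative norm $\|ab\|\le\|a\|\|b\|$; a unital one has unit $1$ with $\|1\|=1$. *)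

From mathcomp Require Import all_boot all_algebra.
From mathcomp Require Import all_classical all_reals all_analysis.
Set Implicit Arguments. Unset Strict Implicit. Unset Printing Implicit Defensive.
Import GRing.Theory Num.Theory.
From mathcomp Require Import complex.
Local Open Scope ring_scope.
Local Open Scope classical_set_scope.

Definition scal (R : realType) (isReal : bool) : numFieldType :=
  if isReal then (R : numFieldType) else (R[i] : numFieldType).

Definition kabs (R : realType) (isReal : bool) : scal R isReal -> R :=
  if isReal return scal R isReal -> R then (fun x : R => `|x|)
  else (fun z : R[i] => Normc.normc z).

Definition kofR (R : realType) (isReal : bool) : R -> scal R isReal :=
  if isReal return R -> scal R isReal then (fun x : R => x)
  else (fun x : R => (real_complex R x : R[i])).

Definition is_metric (R : realType) (T : Type) (d : T -> T -> R) : Prop :=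
  [/\ forall x y, 0 <= d x y,
      forall x y, d x y = 0 <-> x = y,
      forall x y, d x y = d y x &
      forall x y z, d x z <= d x y + d y z].

Definition metric_induces_topology (R : realType) (T : topologicalType)
    (d : T -> T -> R) : Prop :=
  forall (x : T) (A : set T),
    nbhs x A <-> exists2 e : R, 0 < e & [set y | d x y < e] `<=` A.

(* (Possibly non-unital) normed algebras over K, given on a subset S of a   *)
Definition normed_algebra_on (R : realType) (K : fieldType) (absK : K -> R)
    (V : Type) (S : set V) (zero : V) (add : V -> V -> V) (opp : V -> V)
    (scale : K -> V -> V) (mul : V -> V -> V) (norm : V -> R) : Prop :=
  [/\ S zero,
      (forall x y, S x -> S y -> S (add x y)),
      (forall x, S x -> S (opp x)),
      (forall a x, S x -> S (scale a x)) &
      (forall x y, S x -> S y -> S (mul x y))] /\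
  [/\ (forall x y z, S x -> S y -> S z -> add x (add y z) = add (add x y) z),
      (forall x y, S x -> S y -> add x y = add y x),
      (forall x, S x -> add zero x = x) &
      (forall x, S x -> add (opp x) x = zero)] /\
  [/\ (forall a b x, S x -> scale a (scale b x) = scale (a * b) x),
      (forall x, S x -> scale 1 x = x),
      (forall a x y, S x -> S y -> scale a (add x y) = add (scale a x) (scale a y)) &
      (forall a b x, S x -> scale (a + b) x = add (scale a x) (scale b x))] /\
  [/\ (forall x y z, S x -> S y -> S z -> mul x (mul y z) = mul (mul x y) z),
      (forall x y z, S x -> S y -> S z -> mul x (add y z) = add (mul x y) (mul x z)),
      (forall x y z, S x -> S y -> S z -> mul (add x y) z = add (mul x z) (mul y z)),
      (forall a x y, S x -> S y -> scale a (mul x y) = mul (scale a x) y) &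
      (forall a x y, S x -> S y -> scale a (mul x y) = mul x (scale a y))] /\
  [/\ (forall x, S x -> 0 <= norm x),
      (forall x, S x -> norm x = 0 <-> x = zero),
      (forall a x, S x -> norm (scale a x) = absK a * norm x),
      (forall x y, S x -> S y -> norm (add x y) <= norm x + norm y) &
      (forall x y, S x -> S y -> norm (mul x y) <= norm x * norm y)].

Definition complete_on (R : realType) (V : Type) (S : set V)
    (add : V -> V -> V) (opp : V -> V) (norm : V -> R) : Prop :=
  forall u : nat -> V, (forall n, S (u n)) ->
    (forall e : R, 0 < e -> exists N, forall m n, (N <= m)%N -> (N <= n)%N ->
        norm (add (u m) (opp (u n))) < e) ->
    exists2 l, S l &
      forall e : R, 0 < e -> exists N, forall n, (N <= n)%N ->
        norm (add (u n) (opp l)) < e.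

Definition unital_on (R : realType) (V : Type) (S : set V)
    (mul : V -> V -> V) (norm : V -> R) : Prop :=
  exists2 e, S e &
    (forall x, S x -> mul e x = x /\ mul x e = x) /\ norm e = 1.

Section Bd.
Variables (R : realType) (K : fieldType) (X : lmodType K) (Y : lmodType K).
Variables (dX : X -> X -> R) (normY : Y -> R).

Definition dist_fun (F1 F2 : X -> Y) : \bar R :=
  maxe (ereal_sup [set (normY (F1 x - F2 x) / dX x 0)%:E | x in [set x | x != 0]])
       (normY (F1 0 - F2 0))%:E.

Definition Bd : set (X -> Y) := [set F | (dist_fun F (fun _ => 0%R) < +oo)%E].

Definition Bd_norm (F : X -> Y) : R := fine (dist_fun F (fun _ => 0)).

Definition Bd_mul (ofR : R -> K) (mulY : Y -> Y -> Y) (F1 F2 : X -> Y) : X -> Y :=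
  fun x => if x == 0 then mulY (F1 0) (F2 0)
           else ofR (dX x 0)^-1 *: mulY (F1 x) (F2 x).
End Bd.

From mathcomp Require Import all_boot all_algebra.
From mathcomp Require Import all_classical all_reals all_analysis.
From mathcomp Require Import complex lra.
Import GRing.Theory Num.Theory order.Order.TTheory.
Set Implicit Arguments.
Unset Strict Implicit.
Unset Printing Implicit Defensive.

Local Open Scope ring_scope.
Local Open Scope classical_set_scope.

(** Put w(x) = d_X(x,0) for x <> 0 and w(0) = 1.  Then ||F|| is the least M
    with ||F(x)|| <= M w(x) for all x, and (F * G)(x) = w(x)^-1 F(x) G(x) for
    every x.  Hence F |-> F/w is an isometric algebra isomorphism of B_d(X,Y)
    onto the bounded maps X -> Y with the sup norm and the pointwise product,
    and the normed-algebra axioms, completeness and the unit x |-> w(x) 1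
    transfer from Y to B_d(X,Y). *)

Lemma kabs_ge0 (R : realType) (b : bool) (a : scal R b) : 0 <= kabs a.
Proof. by case: b a => [a|[x y]] /=; [exact: normr_ge0 | exact: sqrtr_ge0]. Qed.

Lemma kabs_kofR (R : realType) (b : bool) (r : R) : 0 <= r -> kabs (@kofR R b r) = r.
Proof.
case: b => /= r_ge0; first by rewrite ger0_norm.
by rewrite expr0n /= addr0 sqrtr_sqr ger0_norm.
Qed.

Lemma kofR1 (R : realType) (b : bool) : @kofR R b 1 = 1.
Proof. by case: b. Qed.

Lemma kofRV (R : realType) (b : bool) (r : R) : r != 0 -> @kofR R b r^-1 * kofR b r = 1.
Proof. by case: b => /= r_neq0; rewrite ?mulVf // -rmorphM mulVf. Qed.

Lemma metric_gt0 (R : realType) (T : eqType) (d : T -> T -> R) (x y : T) :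
  is_metric d -> x != y -> 0 < d x y.
Proof.
case=> d_ge0 d_eq0 _ _ xy; rewrite lt_def d_ge0 andbT.
by apply: contra xy => /eqP/d_eq0 ->.
Qed.

Section BdNorm.
Variables (R : realType) (K : fieldType) (X Y : lmodType K).
Variables (dX : X -> X -> R) (normY : Y -> R).
Hypothesis dX_gt0 : forall x, x != 0 -> 0 < dX x 0.
Hypothesis normY_ge0 : forall y, 0 <= normY y.

Local Notation Bd := (Bd dX normY).
Local Notation normB := (Bd_norm dX normY).

Definition Bd_weight (x : X) : R := if x == 0 then 1 else dX x 0.

Lemma Bd_weight_gt0 x : 0 < Bd_weight x.
Proof. by rewrite /Bd_weight; case: eqP => // /eqP; exact: dX_gt0. Qed.

Lemma dist_fun_ge0 F : (0 <= dist_fun dX normY F (fun _ => 0%R))%E.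
Proof. by rewrite /dist_fun le_max lee_fin normY_ge0 orbT. Qed.

Lemma Bd_weight_bound F M : (forall x, normY (F x) <= M * Bd_weight x) ->
  Bd F /\ normB F <= M.
Proof.
move=> FM; have dist_le : (dist_fun dX normY F (fun _ => 0%R) <= M%:E)%E.
  rewrite /dist_fun ge_max subr0 lee_fin.
  have := FM 0; rewrite /Bd_weight eqxx mulr1 => -> /[!andbT].
  apply: ge_ereal_sup => _ [x /= x_neq0 <-]; rewrite subr0 lee_fin.
  by rewrite ler_pdivrMr ?dX_gt0 //; have := FM x; rewrite /Bd_weight (negbTE x_neq0).
have BdF : Bd F by apply: le_lt_trans dist_le _; exact: ltry.
split=> //; rewrite /Bd_norm -lee_fin fineK // ge0_fin_numE //; exact: dist_fun_ge0.
Qed.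

Lemma Bd_norm_weight F : Bd F -> forall x, normY (F x) <= normB F * Bd_weight x.
Proof.
move=> BdF x; have normFE : (normB F)%:E = dist_fun dX normY F (fun _ => 0).
  by rewrite /Bd_norm fineK // ge0_fin_numE // dist_fun_ge0.
rewrite /Bd_weight; case: eqP => [->|/eqP x_neq0].
  by rewrite mulr1 -lee_fin normFE /dist_fun le_max subr0 lexx orbT.
rewrite -ler_pdivrMr ?dX_gt0 // -lee_fin normFE /dist_fun le_max.
by apply/orP; left; apply: ereal_sup_ubound; exists x => //; rewrite subr0.
Qed.

Lemma Bd_norm_ge0 F : Bd F -> 0 <= normB F.
Proof.
move=> /Bd_norm_weight/(_ 0); rewrite /Bd_weight eqxx mulr1.
exact: le_trans (normY_ge0 _).
Qed.

Section BdAlgebra.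
Variables (absK : K -> R) (ofR : R -> K) (mulY : Y -> Y -> Y).
Hypothesis absK_ge0 : forall a, 0 <= absK a.
Hypothesis absK_ofR : forall r, 0 <= r -> absK (ofR r) = r.
Hypothesis ofR1 : ofR 1 = 1.
Hypothesis ofRV : forall r, r != 0 -> ofR r^-1 * ofR r = 1.
Hypothesis Y_normed : normed_algebra_on absK setT 0 +%R -%R *:%R mulY normY.

Let mulYA x y z : mulY x (mulY y z) = mulY (mulY x y) z.
Proof. by case: Y_normed => _ [_ [_ [[+ _ _ _ _] _]]]; apply. Qed.
Let mulYDr x y z : mulY x (y + z) = mulY x y + mulY x z.
Proof. by case: Y_normed => _ [_ [_ [[_ + _ _ _] _]]]; apply. Qed.
Let mulYDl x y z : mulY (x + y) z = mulY x z + mulY y z.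
Proof. by case: Y_normed => _ [_ [_ [[_ _ + _ _] _]]]; apply. Qed.
Let scaleYAl a x y : a *: mulY x y = mulY (a *: x) y.
Proof. by case: Y_normed => _ [_ [_ [[_ _ _ + _] _]]]; apply. Qed.
Let scaleYAr a x y : a *: mulY x y = mulY x (a *: y).
Proof. by case: Y_normed => _ [_ [_ [[_ _ _ _ +] _]]]; apply. Qed.
Let normY_eq0 y : normY y = 0 <-> y = 0.
Proof. by case: Y_normed => _ [_ [_ [_ [_ + _ _ _]]]]; apply. Qed.
Let normYZ a y : normY (a *: y) = absK a * normY y.
Proof. by case: Y_normed => _ [_ [_ [_ [_ _ + _ _]]]]; apply. Qed.
Let normYD x y : normY (x + y) <= normY x + normY y.
Proof. by case: Y_normed => _ [_ [_ [_ [_ _ _ + _]]]]; apply. Qed.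
Let normYM x y : normY (mulY x y) <= normY x * normY y.
Proof. by case: Y_normed => _ [_ [_ [_ [_ _ _ _ +]]]]; apply. Qed.

Local Notation mulB := (Bd_mul dX ofR mulY).

Lemma Bd_mulE F G x : mulB F G x = ofR (Bd_weight x)^-1 *: mulY (F x) (G x).
Proof.
by rewrite /Bd_mul /Bd_weight; case: eqP => [->|_] //; rewrite invr1 ofR1 scale1r.
Qed.

Lemma Bd_mulA F G H : mulB F (mulB G H) = mulB (mulB F G) H.
Proof. by apply/funext => x; rewrite !Bd_mulE -scaleYAr -scaleYAl mulYA. Qed.

Lemma Bd_mulDr F G H : mulB F (G \+ H) = mulB F G \+ mulB F H.
Proof. by apply/funext => x; rewrite /= !Bd_mulE mulYDr scalerDr. Qed.

Lemma Bd_mulDl F G H : mulB (F \+ G) H = mulB F H \+ mulB G H.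
Proof. by apply/funext => x; rewrite /= !Bd_mulE mulYDl scalerDr. Qed.

Lemma Bd_scalerAl a F G : a \*: mulB F G = mulB (a \*: F) G.
Proof. by apply/funext => x; rewrite /= !Bd_mulE -scaleYAl !scalerA mulrC. Qed.

Lemma Bd_scalerAr a F G : a \*: mulB F G = mulB F (a \*: G).
Proof. by apply/funext => x; rewrite /= !Bd_mulE -scaleYAr !scalerA mulrC. Qed.

Lemma Bd0 : Bd \0 /\ normB \0 = 0.
Proof.
have [Bd_null norm_null_le0] : Bd \0 /\ normB \0 <= 0.
  by apply: Bd_weight_bound => x; rewrite mul0r (proj2 (normY_eq0 0)).
by split=> //; apply/le_anti; rewrite norm_null_le0 Bd_norm_ge0.
Qed.

Lemma BdD F G : Bd F -> Bd G -> Bd (F \+ G) /\ normB (F \+ G) <= normB F + normB G.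
Proof.
move=> BdF BdG; apply: Bd_weight_bound => x; rewrite mulrDl.
by apply: le_trans (normYD _ _) _; apply: lerD; exact: Bd_norm_weight.
Qed.

Lemma BdZ a F : Bd F -> Bd (a \*: F) /\ normB (a \*: F) <= absK a * normB F.
Proof.
move=> BdF; apply: Bd_weight_bound => x; rewrite /= normYZ -mulrA.
by apply: ler_wpM2l => //; exact: Bd_norm_weight.
Qed.

Lemma BdN F : Bd F -> Bd (\- F).
Proof.
move=> /(BdZ (-1)) [BdNF _].
by rewrite (_ : \- F = -1 \*: F) //; apply/funext => x; rewrite /= scaleN1r.
Qed.

Lemma BdM F G : Bd F -> Bd G -> Bd (mulB F G) /\ normB (mulB F G) <= normB F * normB G.
Proof.
move=> BdF BdG; apply: Bd_weight_bound => x.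
have w_gt0 := Bd_weight_gt0 x.
rewrite Bd_mulE normYZ absK_ofR; last by rewrite invr_ge0 ltW.
rewrite mulrC ler_pdivrMr // -mulrA mulrAC.
by apply: le_trans (normYM _ _) _; apply: ler_pM => //; exact: Bd_norm_weight.
Qed.

Lemma Bd_normZ a F : Bd F -> normB (a \*: F) = absK a * normB F.
Proof.
move=> BdF; have [BdaF normaF_le] := BdZ a BdF.
apply/le_anti; rewrite normaF_le /=.
have /predU1P[<-|absK_gt0] : (0 == absK a) || (0 < absK a) by rewrite -le_eqVlt.
  by rewrite mul0r Bd_norm_ge0.
rewrite mulrC -ler_pdivlMr //; apply: (proj2 (Bd_weight_bound _)) => x.
rewrite mulrAC ler_pdivlMr // [X in X <= _]mulrC -normYZ; exact: Bd_norm_weight.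
Qed.

Lemma Bd_norm_eq0 F : Bd F -> normB F = 0 <-> F = \0.
Proof.
move=> BdF; split=> [normF0|->]; last exact: Bd0.2.
apply/funext => x /=; apply/normY_eq0/le_anti.
by rewrite normY_ge0 andbT; have := Bd_norm_weight BdF x; rewrite normF0 mul0r.
Qed.

Lemma Bd_normed_algebra : normed_algebra_on absK Bd \0
  (fun F G => F \+ G) (fun F => \- F) (fun a F => a \*: F) mulB normB.
Proof.
split.
  split=> [|F G BdF BdG|F /BdN|a F /(BdZ a) []|F G BdF BdG] //.
  - exact: Bd0.1.
  - exact: (BdD BdF BdG).1.
  - exact: (BdM BdF BdG).1.
split.
  split=> [F G H _ _ _|F G _ _|F _|F _]; apply/funext => x /=.
  - exact: addrA.
  - exact: addrC.
  - exact: add0r.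
  - exact: addNr.
split.
  split=> [a b F _|F _|a F G _ _|a b F _]; apply/funext => x /=.
  - exact: scalerA.
  - exact: scale1r.
  - exact: scalerDr.
  - exact: scalerDl.
split.
  split=> [F G H _ _ _|F G H _ _ _|F G H _ _ _|a F G _ _|a F G _ _].
  - exact: Bd_mulA.
  - exact: Bd_mulDr.
  - exact: Bd_mulDl.
  - exact: Bd_scalerAl.
  - exact: Bd_scalerAr.
split=> [F|F|a F|F G BdF BdG|F G BdF BdG].
- exact: Bd_norm_ge0.
- exact: Bd_norm_eq0.
- exact: Bd_normZ.
- exact: (BdD BdF BdG).2.
- exact: (BdM BdF BdG).2.
Qed.

Lemma Bd_cauchy_weight (u : nat -> X -> Y) : (forall n, Bd (u n)) ->
  (forall e, 0 < e -> exists N, forall m n, (N <= m)%N -> (N <= n)%N ->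
     normB (u m \+ \- u n) < e) ->
  forall e, 0 < e -> exists N, forall m n, (N <= m)%N -> (N <= n)%N ->
    forall x, normY (u m x - u n x) < e * Bd_weight x.
Proof.
move=> Bd_u u_cauchy e e_gt0; have [N uN] := u_cauchy e e_gt0.
exists N => m n Nm Nn x; have [Bd_umn _] := BdD (Bd_u m) (BdN (Bd_u n)).
apply: le_lt_trans (Bd_norm_weight Bd_umn x) _.
by rewrite ltr_pM2r ?Bd_weight_gt0 ?uN.
Qed.

Lemma Bd_complete : complete_on setT +%R -%R normY ->
  complete_on Bd (fun F G => F \+ G) (fun F => \- F) normB.
Proof.
move=> Y_complete u Bd_u u_cauchy.
have u_wcauchy := Bd_cauchy_weight Bd_u u_cauchy.
have u_pointwise x : exists l, forall e, 0 < e ->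
    exists N, forall n, (N <= n)%N -> normY (u n x - l) < e.
  have [|l _ ul] := Y_complete (u ^~ x) (fun _ => I); last by exists l.
  move=> e e_gt0; have w_gt0 := Bd_weight_gt0 x.
  have [N uN] := u_wcauchy _ (divr_gt0 e_gt0 w_gt0).
  by exists N => m n Nm Nn; rewrite -[e](divfK (lt0r_neq0 w_gt0)) uN.
have [l ul] := choice u_pointwise.
have u_to_l e : 0 < e -> exists N, forall n, (N <= n)%N ->
    Bd (u n \+ \- l) /\ normB (u n \+ \- l) <= e.
  move=> e_gt0; have e2_gt0 : 0 < e / 2 by rewrite divr_gt0.
  have [N uN] := u_wcauchy _ e2_gt0.
  exists N => n Nn; apply: Bd_weight_bound => x /=.
  have [N' lN'] := ul x _ (mulr_gt0 e2_gt0 (Bd_weight_gt0 x)).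
  pose k := maxn N N'.
  rewrite -(subrK (u k x) (u n x)) -addrA.
  apply/ltW/(le_lt_trans (normYD _ _)).
  by rewrite (splitr e) mulrDl ltrD ?uN ?lN' ?leq_maxl ?leq_maxr.
have [N uN] := u_to_l 1 ltr01.
have Bd_l : Bd l.
  have -> : l = u N \+ \- (u N \+ \- l).
    by apply/funext => x /=; rewrite opprB addrC subrK.
  exact: (BdD (Bd_u N) (BdN (uN N (leqnn N)).1)).1.
exists l => // e e_gt0; have e2_gt0 : 0 < e / 2 by rewrite divr_gt0.
have [N' uN'] := u_to_l _ e2_gt0.
by exists N' => n N'n; apply: le_lt_trans (uN' n N'n).2 _; lra.
Qed.

Lemma Bd_unital : unital_on setT mulY normY -> unital_on Bd mulB normB.
Proof.
case=> e _ [e_unit norm_e].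
pose E x := ofR (Bd_weight x) *: e.
have normE x : normY (E x) = Bd_weight x.
  by rewrite normYZ absK_ofR ?norm_e ?mulr1 // ltW ?Bd_weight_gt0.
have [BdE normE_le1] : Bd E /\ normB E <= 1.
  by apply: Bd_weight_bound => x; rewrite normE mul1r.
exists E => //; split.
  have ofRwK x : ofR (Bd_weight x)^-1 * ofR (Bd_weight x) = 1.
    by rewrite ofRV ?gt_eqF ?Bd_weight_gt0.
  move=> F _; split; apply/funext => x; rewrite Bd_mulE /E.
  - by rewrite -scaleYAl scalerA ofRwK scale1r (e_unit (F x) I).1.
  - by rewrite -scaleYAr scalerA ofRwK scale1r (e_unit (F x) I).2.
apply/le_anti; rewrite normE_le1 /=.
by have := Bd_norm_weight BdE 0; rewrite normE /Bd_weight eqxx mulr1.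
Qed.

End BdAlgebra.
End BdNorm.

Theorem corollary12 (R : realType) (isReal : bool)
    (X : topologicalLmodType (scal R isReal)) (dX : X -> X -> R)
    (dX_metric : is_metric dX) (dX_topology : metric_induces_topology dX)
    (Y : lmodType (scal R isReal)) (mulY : Y -> Y -> Y) (normY : Y -> R)
    (Y_normed_alg : normed_algebra_on (@kabs R isReal) setT 0 +%R -%R *:%R mulY normY) :
  let BdXY := Bd dX normY in
  let zeroB := fun _ : X => 0 : Y in
  let addB := fun (F G : X -> Y) x => F x + G x in
  let oppB := fun (F : X -> Y) x => - F x in
  let scaleB := fun (a : scal R isReal) (F : X -> Y) x => a *: F x in
  let mulB := Bd_mul dX (@kofR R isReal) mulY in
  let normB := Bd_norm dX normY in
  normed_algebra_on (@kabs R isReal) BdXY zeroB addB oppB scaleB mulB normB /\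
  (complete_on setT +%R -%R normY -> complete_on BdXY addB oppB normB) /\
  (unital_on setT mulY normY -> unital_on BdXY mulB normB).
Proof.
move=> BdXY zeroB addB oppB scaleB mulB normB.
have dX_gt0 (x : X) : x != 0 -> 0 < dX x 0 := metric_gt0 dX_metric.
have normY_ge0 (y : Y) : 0 <= normY y.
  by case: Y_normed_alg => _ [_ [_ [_ [+ _ _ _ _]]]]; apply.
split; last split.
- exact: (Bd_normed_algebra dX_gt0 normY_ge0 (@kabs_ge0 R isReal)
    (@kabs_kofR R isReal) (@kofR1 R isReal) Y_normed_alg).
- exact: (Bd_complete dX_gt0 normY_ge0 (@kabs_ge0 R isReal) Y_normed_alg).
- exact: (Bd_unital dX_gt0 normY_ge0 (@kabs_kofR R isReal) (@kofR1 R isReal)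
    (@kofRV R isReal) Y_normed_alg).
Qed.
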